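(* Let $\Pi$ be an infinite atomless L\'evy measure on $(0,\infty)$ with tail $\overline{\Pi}(x)=\Pi((x,\infty))$ and inverse $\overline{\Pi}^{\leftarrow}(y)=\inf\{x>0:\overline{\Pi}(x)\le y\}$. Suppose there are functions $a:(0,\infty)\to(0,\infty)$, $b:(0,\infty)\to\mathbb{R}$ and $\gamma\le0$ such that for all $y\in\mathbb{R}$, $$\lim_{r\to\infty}\frac{\overline{\Pi}^{\leftarrow}(r-y\sqrt r)-b(r)}{a(r)}=h^{\leftarrow}(y),$$ where $h^{\leftarrow}(y)=(1-e^{-\gamma y/2})/\gamma$ if $\gamma\ne0$ and $h^{\leftarrow}(y)=y/2$ if $\gamma=0$. Let $H^{\leftarrow}(x)=\tfrac14\log^2x$ for $x>1$ and $V(x)=\overline{\Pi}^{\leftarrow}(H^{\leftarrow}(x))$, $x>1$. Then: (i) if $\gamma<0$, $V(x)\sim a(H^{\leftarrow}(x))/|\gamma|$ as $x\to\infty$, and this function is regularly varying at $\infty$ with index $-|\gamma|/2$; (ii) if $\gamma=0$, $-V$ belongs to de Haan's class $\Pi$ with slowly varying auxiliary function $\tfrac12 a(H^{\leftarrow}(\cdot))$, i.e. $\lim_{s\to\infty}\frac{-V(sx)+V(s)}{\frac12a(H^{\leftarrow}(s))}=\log x$ for all $x>0$.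
   Context: $H^{\leftarrow}$ is the inverse of $H(t)=e^{2\sqrt t}$. A measurable function $U$ is in de Haan's class $\Pi$ with auxiliary function $g>0$ if $(U(sx)-U(s))/g(s)\to\log x$ as $s\to\infty$ for all $x>0$. *)

From HB Require Import structures.
From mathcomp Require Import all_boot all_order all_algebra.
From mathcomp Require Import all_classical all_reals all_analysis.
Set Implicit Arguments. Unset Strict Implicit. Unset Printing Implicit Defensive.
Import Order.TTheory GRing.Theory Num.Theory numFieldNormedType.Exports.
Local Open Scope classical_set_scope.
Local Open Scope ring_scope.

Section Defs.
Variable R : realType.

Definition pos_half : set R := [set` `]0, +oo[].

Definition levy_measure_pos (P : {measure set R -> \bar R}) : Prop :=
  P [set` `]-oo, 0]] = 0%E /\
  (\int[P]_(x in pos_half) (Num.min 1 (x ^+ 2))%:E < +oo)%E.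

Definition infinite_measure_pos (P : {measure set R -> \bar R}) : Prop :=
  P pos_half = +oo%E.

Definition atomless (P : {measure set R -> \bar R}) : Prop :=
  forall x : R, P [set x] = 0%E.

(* tail  Πbar(x) = Π((x,∞)) (finite for x > 0 for a Lévy measure) *)
Definition tail (P : {measure set R -> \bar R}) (x : R) : R :=
  fine (P [set` `]x, +oo[]).

Definition tail_inv (P : {measure set R -> \bar R}) (y : R) : R :=
  inf [set x : R | 0 < x /\ tail P x <= y].

Definition hinv (gamma y : R) : R :=
  if gamma != 0 then (1 - expR (- gamma * y / 2)) / gamma else y / 2.

Definition Hinv (x : R) : R := (ln x) ^+ 2 / 4.

Definition Vfun (P : {measure set R -> \bar R}) (x : R) : R :=
  tail_inv P (Hinv x).

Definition regularly_varying (f : R -> R) (rho : R) : Prop :=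
  (\forall s \near +oo%R, 0 < f s) /\
  forall x : R, 0 < x ->
    (fun s => f (s * x) / f s) @ +oo%R --> x `^ rho.

Definition slowly_varying (f : R -> R) : Prop := regularly_varying f 0.

End Defs.

From HB Require Import structures.
From mathcomp Require Import all_boot all_order all_algebra.
From mathcomp Require Import all_classical all_reals all_analysis.
From mathcomp Require Import ring lra.
Import Order.TTheory GRing.Theory Num.Theory numFieldNormedType.Exports.
Local Open Scope classical_set_scope.
Local Open Scope ring_scope.

(* Write [phi] for the generalised inverse of the tail and [rho_u r] for
   [(sqrt r + u / 2)^2], so that [Hinv (s * x) = rho_(ln x) (Hinv s)].  Since
   [phi] is monotone and [hinv gamma] is continuous, a bounded shift of the
   argument does not change the limit in the hypothesis; as
   [rho_u r - y * sqrt (rho_u r) = r - (y - u) * sqrt r + O(1)], this gives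
   [(phi r - phi (rho_u r)) / a r --> hinv 0 - hinv (- u)], which is the class-Pi
   statement when gamma = 0.  Normalising one increment of [phi] once by [a r]
   and once by [a (rho_u r)] gives [a (rho_u r) / a r --> exp (gamma * u / 2)],
   i.e. the regular variation of [a \o Hinv].  When gamma < 0, [phi r] is the
   sum of its increments along the orbit of [rho_2]; each is asymptotically
   [(hinv 0 - hinv (-2)) * a] and [a] decays along the orbit with ratio
   [exp gamma < 1], so the geometric series gives [phi r ~ a r / |gamma|]. *)

Section geometric_telescoping.
Context {R : realType}.
Implicit Types (u v : R ^nat) (d q : R).

Lemma telescoping_ge u v d q : 0 <= d -> q < 1 ->
  u @ \oo --> 0 -> v @ \oo --> 0 ->
  (forall n, d * v n <= u n - u n.+1) -> (forall n, q * v n <= v n.+1) ->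
  d / (1 - q) * v 0 <= u 0.
Proof.
(* [K] solves [K = d + q * K], which makes [u n - K * v n] nonincreasing. *)
move=> d0 q1 u0 v0 du qv; set K := d / (1 - q).
have K0 : 0 <= K by rewrite divr_ge0 // subr_ge0 ltW.
have dK : d = K * (1 - q) by rewrite divfK // subr_eq0 gt_eqF.
pose w n := u n - K * v n.
have w_noninc : {homo w : n m / (n <= m)%N >-> m <= n}.
  apply/nonincreasing_seqP => n; rewrite /w.
  have := ler_wpM2l K0 (qv n); have := du n; rewrite dK; nra.
have w0 : w @ \oo --> 0.
  by rewrite -[0](subr0 0) -[X in _ - X](mulr0 K); apply: cvgB u0 (cvgM (cvg_cst K) v0).
by have := nonincreasing_cvgn_ge w_noninc (cvgP _ w0) 0; rewrite (cvg_lim _ w0) // subr_ge0.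
Qed.

Lemma telescoping_le u v d q : 0 <= d -> q < 1 ->
  u @ \oo --> 0 -> v @ \oo --> 0 ->
  (forall n, u n - u n.+1 <= d * v n) -> (forall n, v n.+1 <= q * v n) ->
  u 0 <= d / (1 - q) * v 0.
Proof.
move=> d0 q1 u0 v0 du qv.
rewrite -lerN2 -mulrN.
apply: (@telescoping_ge (fun n => - u n) (fun n => - v n)) => //.
- by rewrite -oppr0; apply: cvgN.
- by rewrite -oppr0; apply: cvgN.
- by move=> n; have := du n; lra.
- by move=> n; have := qv n; lra.
Qed.

Lemma geometric_decay_cvg0 v q : 0 <= q < 1 ->
  (forall n, 0 <= v n) -> (forall n, v n.+1 <= q * v n) -> v @ \oo --> 0.
Proof.
move=> /andP[q0 q1] v0 qv.
have bound n : v n <= q ^+ n * v 0.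
  elim: n => [|n IH]; first by rewrite expr0 mul1r.
  by rewrite exprS -mulrA (le_trans (qv n)) // ler_wpM2l.
apply: (@squeeze_cvgr _ _ _ _ (cst 0) (fun n => q ^+ n * v 0)).
- by near=> n; rewrite v0 bound.
- exact: cvg_cst.
- rewrite -(mul0r (v 0)); apply: cvgM (cvg_cst _).
  by apply: cvg_expr; rewrite ger0_norm.
Unshelve. all: by end_near.
Qed.

End geometric_telescoping.

Lemma dist_divr_le_bounds (R : realFieldType) (x y l e : R) : 0 < y ->
  `|l - x / y| <= e -> (l - e) * y <= x <= (l + e) * y.
Proof.
move=> y0; have -> : x = x / y * y by rewrite divfK ?gt_eqF.
by rewrite !ler_pM2r // => /ler_normlP[]; rewrite mulfK ?gt_eqF //; lra.
Qed.

Section telescoping_ratio.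
Context {R : realType} {sigma phi a : R -> R}.
Hypothesis sigma_ge : forall x, x + 1 <= sigma x.
Hypothesis phi_cvg0 : phi @ +oo --> 0.

Lemma iter_sigma_ge x n : x + n%:R <= iter n sigma x.
Proof.
elim: n => [|n IH] /=; first by rewrite addr0.
by apply: le_trans (sigma_ge _); rewrite -natr1; lra.
Qed.

Lemma iter_sigma_cvgy x : (fun n => iter n sigma x) @ \oo --> +oo.
Proof.
apply/cvgryPge => A; near=> n; apply: le_trans (iter_sigma_ge x n).
by rewrite -lerBlDl; near: n; apply: nbhs_infty_ger.
Unshelve. all: by end_near.
Qed.

Lemma telescoping_ratio_bounds (M r d1 d2 q1 q2 : R) :
  0 <= d1 -> 0 <= d2 -> q1 < 1 -> q2 < 1 ->
  (forall x, M < x -> [/\ 0 < a x,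
     d1 * a x <= phi x - phi (sigma x) <= d2 * a x &
     q1 * a x <= a (sigma x) <= q2 * a x]) ->
  M < r -> d1 / (1 - q1) * a r <= phi r <= d2 / (1 - q2) * a r.
Proof.
move=> d10 d20 q11 q21 step Mr.
pose x n := iter n sigma r.
have orbit n : M < x n.
  elim: n => [|n IH] //=; apply: lt_le_trans (sigma_ge _); lra.
have orbit_step n := step _ (orbit n).
have [ar _ /andP[_ qr]] := step r Mr.
have [asr _ _] := orbit_step 1.
have q20 : 0 <= q2.
  by rewrite -(pmulr_lge0 _ ar); apply: ltW (lt_le_trans asr qr).
have u0 : (fun n => phi (x n)) @ \oo --> 0 := cvg_comp _ _ (iter_sigma_cvgy r) phi_cvg0.
have v0 : (fun n => a (x n)) @ \oo --> 0.
  apply: (@geometric_decay_cvg0 _ _ q2); first by rewrite q20.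
  - by move=> n; case: (orbit_step n) => /ltW.
  - by move=> n; case: (orbit_step n) => _ _ /andP[].
apply/andP; split.
- apply: (@telescoping_ge _ (fun n => phi (x n)) (fun n => a (x n))) => // n;
    by case: (orbit_step n) => _ /andP[? ?] /andP[? ?].
- apply: (@telescoping_le _ (fun n => phi (x n)) (fun n => a (x n))) => // n;
    by case: (orbit_step n) => _ /andP[? ?] /andP[? ?].
Qed.

Lemma cvg_telescoping_ratio (D q : R) : 0 < D -> q < 1 ->
  (\forall x \near +oo, 0 < a x) ->
  (fun x => (phi x - phi (sigma x)) / a x) @ +oo --> D ->
  (fun x => a (sigma x) / a x) @ +oo --> q ->
  (fun x => phi x / a x) @ +oo --> D / (1 - q).
Proof.
move=> D0 q1 a_gt0 D_lim q_lim.
pose k e := (D + e) / (1 - q - e).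
have k_cont : k e @[e --> 0] --> k 0.
  apply: cvgM; first exact: cvgD (cvg_cst _) cvg_id.
  by apply: cvgV; [rewrite subr0 subr_eq0 gt_eqF | apply: cvgB (cvg_cst _) cvg_id].
have k0 : k 0 = D / (1 - q) by rewrite /k addr0 subr0.
apply/cvgrPdist_le => eta eta0; rewrite -k0.
have /cvgrPdist_le/(_ eta eta0)/nbhs_ballP[dl /= dl0 kdl] := k_cont.
pose m := Num.min dl (Num.min D (1 - q)); pose e := m / 2.
have [e0 edl eD eq] : [/\ 0 < e, e < dl, e < D & e < 1 - q].
  have m0 : 0 < m by rewrite !lt_min dl0 D0 subr_gt0 q1.
  have m_dl : m <= dl by rewrite ge_min lexx.
  have m_D : m <= D by rewrite !ge_min lexx orbT.
  have m_q : m <= 1 - q by rewrite !ge_min lexx !orbT.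
  by split; rewrite /e; lra.
have [M [_ step]] : \forall x \near +oo, [/\ 0 < a x,
    (D - e) * a x <= phi x - phi (sigma x) <= (D + e) * a x &
    (q - e) * a x <= a (sigma x) <= (q + e) * a x].
  near=> x; have ax : 0 < a x by near: x.
  split => //; apply: dist_divr_le_bounds => //; near: x.
  - exact: (cvgr_dist_le _ _ D_lim _ e0).
  - exact: (cvgr_dist_le _ _ q_lim _ e0).
near=> r.
have Mr : M < r by near: r; apply: nbhs_pinfty_gt; rewrite num_real.
have [ar _ _] := step r Mr.
have /andP[lo hi] : (D - e) / (1 - (q - e)) * a r <= phi r
                     <= (D + e) / (1 - (q + e)) * a r.
  by apply: telescoping_ratio_bounds step Mr; lra.
have klo : `|k 0 - k (- e)| <= eta by apply: kdl; rewrite /ball /= sub0r opprK gtr0_norm.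
have khi : `|k 0 - k e| <= eta by apply: kdl; rewrite /ball /= sub0r normrN gtr0_norm.
have kloE : k (- e) = (D - e) / (1 - (q - e)) by rewrite /k; congr (_ / _); ring.
have khiE : k e = (D + e) / (1 - (q + e)) by rewrite /k; congr (_ / _); ring.
rewrite -ler_pdivlMr // -kloE in lo; rewrite -ler_pdivrMr // -khiE in hi.
by move: klo khi => /ler_normlP[? ?] /ler_normlP[? ?]; apply/ler_normlP; split; lra.
Unshelve. all: by end_near.
Qed.

End telescoping_ratio.

Section square_root_scale.
Context {R : realType}.
Implicit Types (u r x : R).

Lemma sqrt_cvgy : @Num.sqrt R x @[x --> +oo] --> +oo.
Proof.
apply/cvgryPge => A; near=> x.
apply: le_trans (ler_norm A) _; rewrite -sqrtr_sqr; apply: ler_wsqrtr.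
by near: x; apply: nbhs_pinfty_ge; rewrite num_real.
Unshelve. all: by end_near.
Qed.

Lemma ln_cvgy : @ln R x @[x --> +oo] --> +oo.
Proof.
apply/cvgryPge => A; near=> x.
by rewrite -(expRK A) ler_ln ?posrE ?expR_gt0.
Unshelve. all: by end_near.
Qed.

Lemma sub_mul_sqrt_cvgy (c : R) : (x - c * Num.sqrt x) @[x --> +oo] --> +oo.
Proof.
apply: (ger_cvgy _ sqrt_cvgy); near=> x.
have x0 : 0 <= x by near: x; apply: nbhs_pinfty_ge; rewrite num_real.
have sx : c + 1 <= Num.sqrt x by near: x; exact: (cvgry_ge sqrt_cvgy).
have -> : x - c * Num.sqrt x = Num.sqrt x * (Num.sqrt x - c).
  by rewrite mulrBr -expr2 sqr_sqrtr // mulrC.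
by have := sqrtr_ge0 x; nra.
Unshelve. all: by end_near.
Qed.

(* This is [(Num.sqrt r + u / 2) ^+ 2] when [r >= 0], expanded so that no sign
   condition is needed. *)
Definition sqrt_shift u r := r + u * Num.sqrt r + u ^+ 2 / 4.

Lemma sqrt_shift_cvgy u : sqrt_shift u r @[r --> +oo] --> +oo.
Proof.
apply: (ger_cvgy _ (sub_mul_sqrt_cvgy (- u))); near=> r.
by rewrite /sqrt_shift mulNr opprK lerDl divr_ge0 ?sqr_ge0.
Unshelve. all: by end_near.
Qed.

Lemma sqrt_sqrt_shift u r : 0 <= r -> - (u / 2) <= Num.sqrt r ->
  Num.sqrt (sqrt_shift u r) = Num.sqrt r + u / 2.
Proof.
move=> r0 ur; have -> : sqrt_shift u r = (Num.sqrt r + u / 2) ^+ 2.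
  by rewrite /sqrt_shift sqrrD sqr_sqrtr //; field.
by rewrite sqrtr_sqr ger0_norm //; lra.
Qed.

Lemma Hinv_cvgy : @Hinv R x @[x --> +oo] --> +oo.
Proof.
apply: (ger_cvgy _ ln_cvgy); near=> x.
have : 4 <= ln x by near: x; exact: (cvgry_ge ln_cvgy).
by rewrite /Hinv; nra.
Unshelve. all: by end_near.
Qed.

Lemma Hinv_gt0 x : 1 < x -> 0 < Hinv x.
Proof. by move=> /ln_gt0 x0; rewrite /Hinv divr_gt0 ?exprn_gt0. Qed.

Lemma Hinv_mul x s : 1 <= s -> 0 < x -> Hinv (s * x) = sqrt_shift (ln x) (Hinv s).
Proof.
move=> s1 x0; have s0 : 0 < s by lra.
rewrite /sqrt_shift; have -> : Num.sqrt (Hinv s) = ln s / 2.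
  have -> : Hinv s = (ln s / 2) ^+ 2 by rewrite /Hinv; field.
  by rewrite sqrtr_sqr ger0_norm // divr_ge0 // ln_ge0.
by rewrite /Hinv lnM ?posrE //; field.
Qed.

End square_root_scale.

Section bounded_shift.
Context {R : realType} {phi a b h : R -> R} {T : R}.
Hypothesis phi_noninc : forall u v, T <= u -> u <= v -> phi v <= phi u.
Hypothesis a_gt0 : forall r, 0 < r -> 0 < a r.
Hypothesis h_cont : continuous h.
Hypothesis phi_cvg :
  forall y, (fun r => (phi (r - y * Num.sqrt r) - b r) / a r) @ +oo --> h y.

Lemma cvg_shift d y :
  (fun r => (phi (r - y * Num.sqrt r + d) - b r) / a r) @ +oo --> h y.
Proof.
(* For large [r], the argument lies between [r - (y + del) * sqrt r] and
   [r - (y - del) * sqrt r], where [phi] is monotone. *)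
apply/cvgrPdist_le => e e0.
have e20 : 0 < e / 2 by lra.
have /cvgrPdist_le/(_ _ e20)/nbhs_ballP[dl /= dl0 hdl] := h_cont y.
pose del := dl / 2; have del0 : 0 < del by rewrite divr_gt0.
have h_up : `|h y - h (y + del)| <= e / 2.
  by apply: hdl; rewrite /ball /= opprD addrA subrr add0r normrN gtr0_norm // /del; lra.
have h_lo : `|h y - h (y - del)| <= e / 2.
  by apply: hdl; rewrite /ball /= opprB addrCA subrr addr0 gtr0_norm // /del; lra.
near=> r.
have ar : 0 < a r by apply: a_gt0; near: r; apply: nbhs_pinfty_gt; rewrite num_real.
have Tr : T <= r - (y + del) * Num.sqrt r by near: r; exact: (cvgry_ge (sub_mul_sqrt_cvgy (y + del))).
have dr : `|d| / del <= Num.sqrt r by near: r; exact: (cvgry_ge sqrt_cvgy).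
rewrite ler_pdivrMr // in dr; have /ler_normlP[dr1 dr2] := dr.
have up : (phi (r - y * Num.sqrt r + d) - b r) / a r <=
          (phi (r - (y + del) * Num.sqrt r) - b r) / a r.
  by rewrite ler_pM2r ?invr_gt0 // lerD2r; apply: phi_noninc; lra.
have lo : (phi (r - (y - del) * Num.sqrt r) - b r) / a r <=
          (phi (r - y * Num.sqrt r + d) - b r) / a r.
  by rewrite ler_pM2r ?invr_gt0 // lerD2r; apply: phi_noninc; lra.
have c_up : `|h (y + del) - (phi (r - (y + del) * Num.sqrt r) - b r) / a r| <= e / 2.
  by near: r; exact: (cvgr_dist_le _ _ (phi_cvg _) _ e20).
have c_lo : `|h (y - del) - (phi (r - (y - del) * Num.sqrt r) - b r) / a r| <= e / 2.
  by near: r; exact: (cvgr_dist_le _ _ (phi_cvg _) _ e20).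
move: h_up h_lo c_up c_lo => /ler_normlP[? ?] /ler_normlP[? ?] /ler_normlP[? ?] /ler_normlP[? ?].
by apply/ler_normlP; split; lra.
Unshelve. all: by end_near.
Qed.

End bounded_shift.

Section hinv.
Context {R : realType}.
Implicit Types g u y : R.

Lemma hinv_continuous g : continuous (hinv g).
Proof.
move=> y; rewrite /hinv; case: (g != 0).
- apply: cvgM; last exact: cvg_cst.
  apply: cvgB; first exact: cvg_cst.
  apply: continuous_comp; last exact: continuous_expR.
  by apply: cvgM; [apply: cvgM; [exact: cvg_cst | exact: cvg_id] | exact: cvg_cst].
- by apply: cvgM; [exact: cvg_id | exact: cvg_cst].
Qed.

Lemma hinv0 g : hinv g 0 = 0.
Proof. by rewrite /hinv !(mulr0, mul0r) expR0 subrr mul0r; case: ifP. Qed.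

Lemma hinv_gt0 g y : 0 < y -> 0 < hinv g y.
Proof.
move=> y0; rewrite /hinv; case: (ltgtP g 0) => [g0|g0|->]; last by rewrite divr_gt0.
- rewrite /= -mulrNN -invrN divr_gt0 ?oppr_gt0 //.
  by rewrite subr_lt0 expR_gt1 divr_gt0 ?mulr_gt0 ?oppr_gt0.
- rewrite /= divr_gt0 // subr_gt0 expR_lt1 !mulNr oppr_lt0.
  by rewrite divr_gt0 ?mulr_gt0.
Qed.

Lemma hinv_shift g u y :
  hinv g (y - u) = hinv g (- u) + expR (g * u / 2) * hinv g y.
Proof.
rewrite /hinv; case: eqP => [-> | /eqP g0] /=; first by rewrite !mul0r expR0; field.
have -> : expR (- g * (y - u) / 2) = expR (g * u / 2) * expR (- g * y / 2).
  by rewrite -expRD; congr expR; field.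
have -> : - g * - u / 2 = g * u / 2 by field.
by field.
Qed.

End hinv.

Section auxiliary_function.
Context {R : realType} {phi a b : R -> R} {g T : R}.
Hypothesis phi_noninc : forall u v, T <= u -> u <= v -> phi v <= phi u.
Hypothesis a_gt0 : forall r, 0 < r -> 0 < a r.
Hypothesis phi_cvg :
  forall y, (fun r => (phi (r - y * Num.sqrt r) - b r) / a r) @ +oo --> hinv g y.

Let phi_cvg_shift := cvg_shift phi_noninc a_gt0 (@hinv_continuous R g) phi_cvg.

Lemma cvg_at_sqrt_shift u y :
  (fun r => (phi (sqrt_shift u r - y * Num.sqrt (sqrt_shift u r)) - b r) / a r)
    @ +oo --> hinv g (y - u).
Proof.
apply: cvg_trans (phi_cvg_shift (u ^+ 2 / 4 - y * u / 2) (y - u)).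
apply: near_eq_cvg; near=> r.
rewrite sqrt_sqrt_shift; first by congr ((phi _ - _) / _); rewrite /sqrt_shift; ring.
  by near: r; apply: nbhs_pinfty_ge; rewrite num_real.
by near: r; exact: (cvgry_ge sqrt_cvgy).
Unshelve. all: by end_near.
Qed.

Lemma cvg_sqrt_shift_increment u :
  (fun r => (phi r - phi (sqrt_shift u r)) / a r) @ +oo --> hinv g 0 - hinv g (- u).
Proof.
have -> : (fun r => (phi r - phi (sqrt_shift u r)) / a r) =
    (fun r => (phi (r - 0 * Num.sqrt r) - b r) / a r
              - (phi (r - (- u) * Num.sqrt r + u ^+ 2 / 4) - b r) / a r).
  by apply/funext => r; rewrite mul0r subr0 mulNr opprK; ring.
exact: cvgB (phi_cvg 0) (phi_cvg_shift _ _).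
Qed.

Lemma cvg_auxiliary_ratio u :
  (fun r => a (sqrt_shift u r) / a r) @ +oo --> expR (g * u / 2).
Proof.
(* The same increment [X r] of [phi], normalised by [a r] and by [a (rho r)],
   has the limits [expR (g * u / 2) * hinv g 2] and [hinv g 2]. *)
pose rho := sqrt_shift u.
pose X r := phi (rho r - 2 * Num.sqrt (rho r)) - phi (rho r - 0 * Num.sqrt (rho r)).
have X_a_lim : (fun r => X r / a r) @ +oo --> expR (g * u / 2) * hinv g 2.
  have -> : expR (g * u / 2) * hinv g 2 = hinv g (2 - u) - hinv g (0 - u).
    by rewrite !hinv_shift hinv0; ring.
  apply: cvg_trans _ (cvgB (cvg_at_sqrt_shift u 2) (cvg_at_sqrt_shift u 0)).
  by apply: near_eq_cvg; near=> r; rewrite /X /rho !fctE /=; ring.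
have X_arho_lim : (fun r => X r / a (rho r)) @ +oo --> hinv g 2 - hinv g 0.
  apply: cvg_trans _ (cvgB (cvg_comp _ _ (sqrt_shift_cvgy u) (phi_cvg 2))
                           (cvg_comp _ _ (sqrt_shift_cvgy u) (phi_cvg 0))).
  by apply: near_eq_cvg; near=> r; rewrite /X /rho !fctE /=; ring.
rewrite hinv0 subr0 in X_arho_lim.
have h2 : hinv g 2 != 0 by rewrite gt_eqF // hinv_gt0.
rewrite -(mulfK h2 (expR _)).
have ratio_lim : (fun r => X r / a r / (X r / a (rho r))) @ +oo
    --> expR (g * u / 2) * hinv g 2 / hinv g 2.
  by apply: cvgM => //; exact: cvgV.
apply: cvg_trans _ ratio_lim.
apply: near_eq_cvg; near=> r.
have X_arho_neq0 : X r / a (rho r) != 0 by near: r; exact: (cvgr_neq0 _ X_arho_lim h2).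
have X_neq0 : X r != 0 by apply: contraNneq X_arho_neq0 => ->; rewrite mul0r.
have ar : 0 < a r by apply: a_gt0; near: r; apply: nbhs_pinfty_gt; rewrite num_real.
have arho : 0 < a (rho r).
  by apply: a_gt0; near: r; exact: (cvgry_gt (sqrt_shift_cvgy u)).
by rewrite /rho in arho *; field; rewrite X_neq0 !gt_eqF.
Unshelve. all: by end_near.
Qed.

Lemma regularly_varying_auxiliary c : 0 < c ->
  regularly_varying (fun x => a (Hinv x) / c) (g / 2).
Proof.
move=> c0; split.
  near=> s; apply: divr_gt0 c0; apply/a_gt0/Hinv_gt0.
  by near: s; apply: nbhs_pinfty_gt; rewrite num_real.
move=> x x0; have -> : x `^ (g / 2) = expR (g * ln x / 2).
  by rewrite /powR gt_eqF //; congr expR; ring.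
apply: cvg_trans _ (cvg_comp _ _ Hinv_cvgy (cvg_auxiliary_ratio (ln x))).
apply: near_eq_cvg; near=> s.
have s1 : 1 < s by near: s; apply: nbhs_pinfty_gt; rewrite num_real.
rewrite /= -Hinv_mul ?(ltW s1) //.
by field; rewrite !gt_eqF ?a_gt0 ?Hinv_gt0.
Unshelve. all: by end_near.
Qed.

Lemma cvg_ratio_auxiliary : g < 0 -> phi @ +oo --> 0 ->
  (fun r => phi r / a r) @ +oo --> `|g|^-1.
Proof.
move=> g_lt0 phi_cvg0.
have q_lt1 : expR g < 1 by rewrite expR_lt1.
have D_gt0 : 0 < hinv g 0 - hinv g (- 2).
  have := hinv_shift g 2 2; rewrite subrr => ->.
  have h2 : 0 < hinv g 2 by apply: hinv_gt0.
  by have := mulr_gt0 (expR_gt0 (g * 2 / 2)) h2; lra.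
have -> : `|g|^-1 = (hinv g 0 - hinv g (- 2)) / (1 - expR g).
  rewrite ltr0_norm // /hinv (lt_eqF g_lt0) /= !(mulr0, mul0r) expR0 subrr mul0r sub0r.
  have -> : - g * - 2 / 2 = g by field.
  by field; rewrite subr_eq0 eq_sym (lt_eqF q_lt1) (lt_eqF g_lt0).
apply: (@cvg_telescoping_ratio _ (sqrt_shift 2) _ _ _ phi_cvg0) => //.
- by move=> x; rewrite /sqrt_shift; have := sqrtr_ge0 x; lra.
- by near=> x; apply: a_gt0; near: x; apply: nbhs_pinfty_gt; rewrite num_real.
- exact: cvg_sqrt_shift_increment.
- by have := cvg_auxiliary_ratio 2; rewrite mulfK.
Unshelve. all: by end_near.
Qed.

End auxiliary_function.

Section tail_inv.
Context {R : realType} (P : {measure set R -> \bar R}).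

Lemma tail_inv_ge0 y : 0 <= tail_inv P y.
Proof.
rewrite /tail_inv; have [[x Sx]|/forallNP S0] := pselect (exists x, 0 < x /\ tail P x <= y).
  by apply: lb_le_inf; [exists x | move=> z [/ltW]].
suff -> : [set x | 0 < x /\ tail P x <= y] = set0 by rewrite inf0.
by apply/seteqP; split => // x /S0.
Qed.

Lemma tail_inv_noninc u v : tail P 1 <= u -> u <= v -> tail_inv P v <= tail_inv P u.
Proof.
move=> h1 uv; apply: lb_le_inf; first by exists 1; split => //; apply: ltr01.
move=> z [z0 hz]; apply: ge_inf; first by exists 0 => w [/ltW].
by split => //; apply: le_trans uv.
Qed.

Lemma tail_inv_cvg0 : tail_inv P @ +oo --> 0.
Proof.
apply/cvgrPdist_le => e e0; near=> y.
rewrite sub0r normrN ger0_norm ?tail_inv_ge0 //.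
apply: ge_inf; first by exists 0 => w [/ltW].
by split => //; near: y; apply: nbhs_pinfty_ge; rewrite num_real.
Unshelve. all: by end_near.
Qed.

End tail_inv.

Theorem proposition3p1 (R : realType) (P : {measure set R -> \bar R})
    (a b : R -> R) (gamma : R) :
  levy_measure_pos P -> infinite_measure_pos P -> atomless P ->
  (forall r, 0 < r -> 0 < a r) ->
  gamma <= 0 ->
  (forall y : R,
     (fun r => (tail_inv P (r - y * Num.sqrt r) - b r) / a r) @ +oo%R
       --> hinv gamma y) ->
  (gamma < 0 ->
     ((fun x => Vfun P x / (a (Hinv x) / `|gamma|)) @ +oo%R --> (1:R)) /\
     regularly_varying (fun x => a (Hinv x) / `|gamma|) (- `|gamma| / 2)) /\
  (gamma = 0 ->
     slowly_varying (fun x => a (Hinv x) / 2) /\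
     forall x : R, 0 < x ->
       ((fun s => (- Vfun P (s * x) + Vfun P s) / (a (Hinv s) / 2)) @ +oo%R
         --> ln x)).
Proof.
move=> _ _ _ a_gt0 _ Pi_cvg; have noninc := tail_inv_noninc P.
split=> [g_lt0 | g0].
  have g_gt0 : 0 < `|gamma| by rewrite normr_gt0 lt_eqF.
  split; last first.
    have -> : - `|gamma| / 2 = gamma / 2 by rewrite ltr0_norm // opprK.
    exact: regularly_varying_auxiliary noninc a_gt0 Pi_cvg _ g_gt0.
  rewrite -(mulfV (lt0r_neq0 g_gt0)).
  apply: cvg_trans _ (cvg_comp _ _ Hinv_cvgy
    (cvgM (cvg_cst _) (cvg_ratio_auxiliary noninc a_gt0 Pi_cvg g_lt0 (tail_inv_cvg0 P)))).
  by apply: near_eq_cvg; near=> x; rewrite /Vfun /= invf_div; ring.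
subst gamma; split.
  rewrite /slowly_varying -[X in regularly_varying _ X](mul0r (2^-1 : R)).
  exact: regularly_varying_auxiliary noninc a_gt0 Pi_cvg _ _.
move=> x x0.
have -> : ln x = 2 * (hinv 0 0 - hinv 0 (- ln x)) by rewrite /hinv eqxx /=; field.
apply: cvg_trans _ (cvg_comp _ _ Hinv_cvgy
  (cvgM (cvg_cst _) (cvg_sqrt_shift_increment noninc a_gt0 Pi_cvg (ln x)))).
apply: near_eq_cvg; near=> s.
have s1 : 1 <= s by near: s; apply: nbhs_pinfty_ge; rewrite num_real.
by rewrite /Vfun /= Hinv_mul // invf_div; ring.
Unshelve. all: by end_near.
Qed.
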